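(* Let $V$ be a set of $n$ vertices partitioned into $k$ clusters of sizes $s_1\ge s_2\ge\dots\ge s_k$ (so $\sum_i s_i=n$). If $s_k<\frac{n}{4k}$, then there exists $h<k$ such that $$s_h\ge\frac{n}{2k}-h\cdot\frac{n}{4k^2}\quad\text{and}\quad s_{h+1}<\frac{n}{2k}-(h+1)\cdot\frac{n}{4k^2}.$$ Moreover, $\sum_{i\le h}s_i\ge n/2$. *)

From mathcomp Require Import all_boot all_order all_algebra.
Set Implicit Arguments. Unset Strict Implicit. Unset Printing Implicit Defensive.

(* Put t_j = n/(2k) - j n/(4k^2). Since s_1 is at least the average n/k, s_1 >= t_1, while
   s_k < n/(4k) = t_k; so some h < k has s_h >= t_h and s_(h+1) < t_(h+1).  The clusters
   h+1, ..., k, at most k of them, all have size at most s_(h+1) < t_(h+1) <= n/(2k), so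
   together they hold less than n/2 vertices and the first h clusters hold at least n/2. *)

From mathcomp Require Import all_boot all_order all_algebra.
From mathcomp Require Import zify ring lra.
Set Implicit Arguments. Unset Strict Implicit. Unset Printing Implicit Defensive.
Import Order.TTheory GRing.Theory Num.Theory.
Local Open Scope ring_scope.

Lemma ex_step_true_false (P : pred nat) (a b : nat) :
  (a <= b)%N -> P a -> ~~ P b -> exists2 h, (a <= h < b)%N & P h && ~~ P h.+1.
Proof.
elim: b => [|b IHb]; first by rewrite leqn0 => /eqP-> ->.
rewrite leq_eqVlt ltnS => /predU1P[-> -> //| le_ab] Pa nPb1.
have [Pb | nPb] := boolP (P b); first by exists b; rewrite ?le_ab ?leqnn ?Pb.
have [h /andP[ah hb] Ph] := IHb le_ab Pa nPb.
by exists h; rewrite // ah ltnS ltnW.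
Qed.

Section NonincreasingSizes.

Variables (k : nat) (s : nat -> nat).
Hypothesis s_nonincr : forall i : nat, (1 <= i)%N -> (i < k)%N -> (s i.+1 <= s i)%N.

Lemma sizes_le i j : (1 <= i)%N -> (i <= j)%N -> (j <= k)%N -> (s j <= s i)%N.
Proof.
move=> i1 ij jk.
have le_homo := @homo_leq_in nat [pred i | (1 <= i <= k)%N] s (fun a b => b <= a)%N
  leqnn (fun y x z xy yz => leq_trans yz xy).
apply: le_homo => //; rewrite ?inE; try lia.
- by move=> x y /andP[x1 _] /andP[_ yk] z /andP[xz zy]; rewrite inE; lia.
- by move=> x /andP[x1 _] /andP[_ xk]; apply: s_nonincr.
Qed.

Lemma sum_sizes_le m p : (1 <= m)%N -> (p <= k.+1)%N ->
  (\sum_(m <= i < p) s i <= (p - m) * s m)%N.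
Proof.
move=> m1 pk; rewrite -sum_nat_const_nat big_nat_cond [leqRHS]big_nat_cond.
by apply: leq_sum => i /andP[/andP[mi ip] _]; apply: sizes_le => //; lia.
Qed.

End NonincreasingSizes.

Section Thresholds.

Variables (R : realFieldType) (n k : nat).
Hypothesis k_gt0 : (0 < k)%N.

Definition threshold (j : nat) : R :=
  n%:R / (2 * k%:R) - j%:R * (n%:R / (4 * k%:R ^+ 2)).

Let kR_gt0 : 0 < k%:R :> R. Proof. by rewrite ltr0n. Qed.

Lemma threshold_le_half_avg j : threshold j <= n%:R / (2 * k%:R).
Proof.
rewrite lerBlDr lerDl mulr_ge0 ?divr_ge0 ?mulr_ge0 ?exprn_ge0 ?ler0n //.
Qed.

Lemma threshold_last : threshold k = n%:R / (4 * k%:R).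
Proof. rewrite /threshold; field; exact: lt0r_neq0. Qed.

Lemma half_avg_le_of_avg_le (m : nat) : (n <= k * m)%N -> n%:R / (2 * k%:R) <= m%:R :> R.
Proof.
rewrite -(ler_nat R) natrM => nkm.
have km_ge0 : 0 <= k%:R * m%:R :> R by rewrite -natrM ler0n.
rewrite ler_pdivrMr ?mulr_gt0 //; lra.
Qed.

Lemma mul_le_half_of_lt_half_avg (m x : nat) : (m <= k)%N ->
  x%:R < n%:R / (2 * k%:R) :> R -> (m * x)%:R <= n%:R / 2 :> R.
Proof.
rewrite -(ler_nat R) ltr_pdivlMr ?mulr_gt0 // natrM => mk xlt.
have : m%:R * x%:R <= k%:R * x%:R :> R by rewrite ler_wpM2r ?ler0n.
lra.
Qed.

End Thresholds.

Theorem lemma4p2 (R : realFieldType) (n k : nat) (s : nat -> nat)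
  (hk : (0 < k)%N)
  (hsorted : forall i : nat, (1 <= i)%N -> (i < k)%N -> (s i.+1 <= s i)%N)
  (hsum : (\sum_(1 <= i < k.+1) s i)%N = n)
  (hsmall : (s k)%:R < n%:R / (4 * k%:R) :> R) :
  exists h : nat, [/\ (1 <= h)%N, (h < k)%N,
    (s h)%:R >= n%:R / (2 * k%:R) - h%:R * (n%:R / (4 * k%:R ^+ 2)) :> R,
    (s h.+1)%:R < n%:R / (2 * k%:R) - h.+1%:R * (n%:R / (4 * k%:R ^+ 2)) :> R
  & n%:R / 2 <= (\sum_(1 <= i < h.+1) s i)%N%:R :> R].
Proof.
pose above j := threshold R n k j <= (s j)%:R.
have above1 : above 1%N.
  apply: le_trans (threshold_le_half_avg R n k 1) (half_avg_le_of_avg_le R hk _).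
  by have := sum_sizes_le hsorted (leqnn 1) (leqnn k.+1); rewrite subn1 hsum.
have not_above_k : ~~ above k by rewrite /above -ltNge threshold_last.
have [h /andP[h1 hk'] /andP[above_h]] := ex_step_true_false hk above1 not_above_k.
rewrite /above -ltNge => below_h1.
exists h; split => //.
have tail_le : (\sum_(h.+1 <= i < k.+1) s i <= k * s h.+1)%N.
  by apply: leq_trans (sum_sizes_le hsorted _ _) _; rewrite ?leq_mul2r; lia.
have tail_half := mul_le_half_of_lt_half_avg hk (leqnn k)
  (lt_le_trans below_h1 (threshold_le_half_avg R n k h.+1)).
have split_at_h : (h.+1 <= k.+1)%N by rewrite ltnS ltnW.
have := hsum; rewrite (big_cat_nat (ltn0Sn h) split_at_h) /= => /(congr1 (GRing.natmul (1 : R))).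
rewrite natrD; move: tail_le; rewrite -(ler_nat R); lra.
Qed.
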